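(* Let $T$ be a tree with $k$ leaves, let $1\le l$ be an integer, and let $s$ and $t$ be disjoint subtrees of $T$ such that $s$ has $l$ boundary nodes and $t$ has $k-l+2$ boundary nodes. Then every node of $T$ of degree greater than two belongs to $s$ or to $t$.
   Context: A subtree of a tree $T$ is a nonempty set of nodes inducing a connected subgraph. A boundary node of a subtree $t$ of $T$ is a node of $t$ that has a neighbour in $T$ not belonging to $t$. *)

(* A finite simple graph on a finType T is a symmetric,
   irreflexive boolean relation e : rel T. *)
From mathcomp Require Import all_boot.
Set Implicit Arguments. Unset Strict Implicit. Unset Printing Implicit Defensive.

Section Trees.
Variables (T : finType) (e : rel T).

Definition simple_graph : Prop := symmetric e /\ irreflexive e.

Definition connected_graph : Prop := forall x y : T, connect e x y.

Definition acyclic : Prop := forall c : seq T, ucycle e c -> size c < 3.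

Definition is_tree : Prop :=
  simple_graph /\ 0 < #|T| /\ connected_graph /\ acyclic.

Definition neighbours (x : T) : {set T} := [set y | e x y].
Definition degree (x : T) : nat := #|neighbours x|.
Definition leaves : {set T} := [set x | degree x == 1].

Definition induced (A : {set T}) : rel T :=
  [rel u v | [&& e u v, u \in A & v \in A]].

Definition is_subtree (A : {set T}) : Prop :=
  A != set0 /\ {in A &, forall x y, connect (induced A) x y}.

Definition boundary (A : {set T}) : {set T} :=
  [set x in A | [exists y, e x y && (y \notin A)]].

End Trees.

From mathcomp Require Import all_boot zify.
Set Implicit Arguments. Unset Strict Implicit. Unset Printing Implicit Defensive.

(* For an edge (x, y) of a forest, the branch at x towards y is
   the set of nodes reachable from y without passing through x.  Branches are
   the basic tool: each one contains a leaf, two branches whose roots lie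
   outside each other are disjoint or equal, and a subtree avoiding x lies
   inside or outside each branch at x.

   For a subtree A, every out-edge (x, y) of A (x in A, y not in A) has a
   branch disjoint from A.  Given three pairwise disjoint subtrees A, B, C,
   the out-edges of A, B, C whose branches avoid the two other subtrees have
   pairwise disjoint branches, hence are at most as many as the leaves; the
   remaining out-edges are those pointing towards another subtree, and a
   case analysis on the relative position of A, B, C shows there are at most
   four of them (the "tree of three pieces" has two edges).  Hence
     #out A + #out B + #out C <= #leaves + 4.
   Applied to s, t and a node v outside s and t (with C = {v}), using
   #boundary <= #out and degree v <= #out {v}, this gives degree v <= 2. *)

Lemma connect_cross (T : finType) (r : rel T) (P : pred T) a b :
  connect r a b -> ~~ P a -> P b ->
  exists u v, [/\ connect r a u, r u v, ~~ P u & P v].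
Proof.
move/connectP=> [p pth ->]; elim: p a pth => /= [a _ Pa Pb | c p IH a /andP[rac pth] Pa Pl].
  by rewrite Pb in Pa.
case Pc: (P c); first by exists a, c; split; rewrite ?Pc.
have [u [v [cu ruv Pu Pv]]] := IH c pth (negbT Pc) Pl.
by exists u, v; split=> //; apply: connect_trans (connect1 rac) cu.
Qed.

Lemma cards_exclusive (T : finType) (S1 S2 : {set T}) :
  (forall a b, a \in S1 -> b \in S2 -> False) -> #|S1| = 0 \/ #|S2| = 0.
Proof.
move=> excl; case: (set_0Vmem S1) => [-> | [a aS1]]; first by left; rewrite cards0.
case: (set_0Vmem S2) => [-> | [b bS2]]; first by right; rewrite cards0.
by case: (excl a b).
Qed.

Lemma cardsU_disjoint (T : finType) (A B : {set T}) :
  [disjoint A & B] -> #|A :|: B| = #|A| + #|B|.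
Proof. by move=> dAB; rewrite cardsU (disjoint_setI0 dAB) cards0 subn0. Qed.

Lemma cardsU_le (T : finType) (A B : {set T}) : #|A :|: B| <= #|A| + #|B|.
Proof. by rewrite cardsU leq_subr. Qed.

Lemma disjointUl (T : finType) (X B C : {set T}) :
  [disjoint B :|: C & X] = [disjoint B & X] && [disjoint C & X].
Proof. by rewrite -disjointU; apply: eq_disjoint => z; rewrite !inE. Qed.

Lemma disjointUr (T : finType) (X B C : {set T}) :
  [disjoint X & B :|: C] = [disjoint X & B] && [disjoint X & C].
Proof. by rewrite !(disjoint_sym X) disjointUl. Qed.

Section Branches.
Variables (T : finType) (e : rel T).

Lemma connect_induced_mem (A : {set T}) a b :
  connect (induced e A) a b -> a \in A -> b \in A.
Proof.
move/connectP=> [p pth ->]; elim: p a pth => //= c p IH a /andP[/and3P[_ _ cA] pth] _.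
exact: IH.
Qed.

Lemma path_induced (A : {set T}) a p :
  path (induced e A) a p -> path e a p /\ all (mem A) p.
Proof.
elim: p a => //= c p IH a /andP[/and3P[eac _ cA] pth]; have [epth allA] := IH c pth.
by rewrite eac epth cA allA.
Qed.

Hypotheses (esym : symmetric e) (eirr : irreflexive e) (eacyc : acyclic e).

Definition branch (x y : T) : {set T} :=
  [set z | connect (induced e (~: [set x])) y z].

Lemma branch_root x y : y \in branch x y.
Proof. by rewrite inE connect0. Qed.

Lemma edge_neq x y : e x y -> y != x.
Proof. by apply: contraTneq => ->; rewrite eirr. Qed.

Lemma branch_notin x y : e x y -> x \notin branch x y.
Proof.
move=> exy; rewrite inE; apply/negP => /connect_induced_mem.
by rewrite !inE (edge_neq exy) eqxx => /(_ isT).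
Qed.

Lemma branch_closed x y z w :
  e x y -> z \in branch x y -> e z w -> w != x -> w \in branch x y.
Proof.
move=> exy zB ezw wx; have zx : z != x by apply: contraTneq zB => ->; apply: branch_notin.
move: zB; rewrite !inE => cyz; apply: connect_trans cyz (connect1 _).
by rewrite /induced /= ezw !inE zx wx.
Qed.

(* Acyclicity: the other neighbours of x are not in the branch towards y. *)
Lemma branch_other_neighbour x y u :
  e x y -> e x u -> u != y -> u \notin branch x y.
Proof.
move=> exy exu uy; apply/negP; rewrite inE => /connectP[p pth ul].
case/shortenP: pth ul => q pth uq _ ul.
have [epth allq] := path_induced pth.
suff /eacyc : ucycle e (x :: y :: q).
  by case: q {pth uq epth allq} ul => //= ul; rewrite -ul eqxx in uy.
rewrite /ucycle /cycle /= exy rcons_path epth /= -ul esym exu /=.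
move: uq => /= ->; rewrite andbT inE negb_or eq_sym (edge_neq exy) /=.
by apply/negP => /(allP allq); rewrite !inE eqxx.
Qed.

Lemma branch_meet_eq x1 y1 x2 y2 z : e x1 y1 -> e x2 y2 ->
  x2 \notin branch x1 y1 -> x1 \notin branch x2 y2 ->
  z \in branch x1 y1 -> z \in branch x2 y2 -> (x1, y1) = (x2, y2).
Proof.
move=> e1 e2 n21 n12 z1 z2; apply/eqP; apply/negPn/negP => neq.
have e2' : e y2 x2 by rewrite esym.
case: (boolP (y2 \in branch x1 y1)) => y2B.
  have x21 : x2 = x1 by apply/eqP; apply: contraNT n21 => /(branch_closed e1 y2B e2').
  subst x2; have y21 : y2 != y1 by apply: contraNneq neq => ->.
  by rewrite (negPf (branch_other_neighbour e1 e2 y21)) in y2B.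
move: z2; rewrite inE => c2.
have [u [w [cu /and3P[euw _ _] uB wB]]] := connect_cross (P := mem (branch x1 y1)) c2 y2B z1.
have ux : u != x1 by apply: contraNneq n12 => <-; rewrite inE.
by case/negP: uB; apply: branch_closed e1 wB _ ux; rewrite esym.
Qed.

Lemma subtree_in_branch (A : {set T}) x y : is_subtree e A ->
  x \notin A -> e x y -> ~~ [disjoint branch x y & A] -> A \subset branch x y.
Proof.
move=> [_ Aconn] xA exy /pred0Pn[z1 /andP[z1B z1A]]; apply/subsetP => z zA.
apply/negPn/negP => zB.
have [u [w [_ /and3P[euw _ wA] uB wB]]] :=
  connect_cross (P := [pred q | q \notin branch x y]) (Aconn _ _ z1A zA) (introT negPn z1B) zB.
have wx : w != x by apply: contraNneq xA => <-.
by case/negP: wB; apply: branch_closed exy (negbNE uB) euw wx.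
Qed.

Lemma branch_off_subtree (A : {set T}) x y : is_subtree e A ->
  x \in A -> y \notin A -> e x y -> [disjoint branch x y & A].
Proof.
move=> [_ Aconn] xA yA exy; apply/pred0Pn => -[z /andP[zB zA]].
have [u [w [_ /and3P[euw uA wA] uB wB]]] :=
  connect_cross (P := [pred q | q \notin branch x y]) (Aconn _ _ zA xA) (introT negPn zB)
    (branch_notin exy).
have wx : w = x.
  by apply/eqP; apply: contraNT wB => /(branch_closed exy (negbNE uB) euw) ->.
subst w; have uy : u != y by apply: contraNneq yA => <-.
have exu : e x u by rewrite esym.
by move: uB; rewrite /= negbK (negPf (branch_other_neighbour exy exu uy)).
Qed.

Lemma branch_sub x y v w : e x y -> e v w ->
  w \in branch x y -> x \notin branch v w -> branch v w \subset branch x y.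
Proof.
move=> exy evw wB xn; apply/subsetP => z zin; apply/negPn/negP => zB.
move: (zin); rewrite inE => c.
have [u [u' [cu ruu' uB u'B]]] :=
  connect_cross (P := [pred q | q \notin branch x y]) c (introT negPn wB) zB.
have u'x : u' = x.
  move: ruu' => /and3P[euu' _ _]; apply/eqP; apply: contraNT u'B.
  by move/(branch_closed exy (negbNE uB) euu') ->.
subst u'; case/negP: xn; rewrite inE; exact: connect_trans cu (connect1 ruu').
Qed.

(* Every branch of a forest contains a leaf: walk away from the root until
   the branch cannot shrink any more. *)
Lemma branch_leaf x y : e x y -> exists2 z, z \in branch x y & z \in leaves e.
Proof.
have [n] := ubnP #|branch x y|; elim: n x y => // n IH x y size_lt exy.
have [deg1 | deg_ne1] := boolP (degree e y == 1).
  by exists y; rewrite ?branch_root // inE.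
have xN : x \in neighbours e y by rewrite inE esym.
have [y' /setD1P[y'x]] : exists y', y' \in neighbours e y :\ x.
  apply/set0Pn; rewrite -card_gt0.
  by move: deg_ne1; rewrite /degree (cardsD1 x) xN add1n; case: #|_ :\ _|.
rewrite inE => eyy'.
have eyx : e y x by rewrite esym.
have xn : x \notin branch y y' by apply: branch_other_neighbour eyy' eyx _; rewrite eq_sym.
have sub : branch y y' \subset branch x y.
  exact: branch_sub eyy' (branch_closed exy (branch_root x y) eyy' y'x) xn.
have lt : #|branch y y'| < #|branch x y|.
  apply: proper_card; rewrite properE sub; apply/subsetPn.
  by exists y; [apply: branch_root | apply: branch_notin].
have [z zB zleaf] := IH y y' (leq_trans lt size_lt) eyy'.
by exists z; first exact: (subsetP sub).
Qed.

(* A family of edges issued from R, each with a branch disjoint from R, has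
   pairwise disjoint branches; picking a leaf in each shows it is no larger
   than the set of leaves. *)
Lemma free_edges_le_leaves (R : {set T}) (D : {set T * T}) :
  (forall d, d \in D -> [/\ e d.1 d.2, d.1 \in R & [disjoint branch d.1 d.2 & R]]) ->
  #|D| <= #|leaves e|.
Proof.
move=> freeD.
pose leaf_of d := odflt d.1 [pick z in branch d.1 d.2 :&: leaves e].
have leaf_ofP d : d \in D -> leaf_of d \in branch d.1 d.2 :&: leaves e.
  move=> /freeD[ed _ _]; rewrite /leaf_of; case: pickP => [z //|none].
  by have [z zB zleaf] := branch_leaf ed; have := none z; rewrite inE zB zleaf.
rewrite -(card_in_imset (f := leaf_of)).
  apply: subset_leq_card; apply/subsetP => z /imsetP[d dD ->].
  by have := leaf_ofP d dD; rewrite inE => /andP[].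
move=> d1 d2 d1D d2D same_leaf.
have [e1 R1 dis1] := freeD d1 d1D; have [e2 R2 dis2] := freeD d2 d2D.
have /setIP[z1 _] := leaf_ofP d1 d1D; have /setIP[z2 _] := leaf_ofP d2 d2D.
rewrite same_leaf in z1.
rewrite [d1]surjective_pairing [d2]surjective_pairing.
exact: (branch_meet_eq e1 e2 (negbT (disjointFl dis1 R2)) (negbT (disjointFl dis2 R1)) z1 z2).
Qed.

Definition out_edges (A : {set T}) : {set T * T} :=
  [set d | [&& d.1 \in A, d.2 \notin A & e d.1 d.2]].
Definition towards (A B : {set T}) : {set T * T} :=
  [set d in out_edges A | ~~ [disjoint branch d.1 d.2 & B]].
Definition away (A B : {set T}) : {set T * T} :=
  [set d in out_edges A | [disjoint branch d.1 d.2 & B]].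

(* Each boundary node of A is the source of some out-edge of A. *)
Lemma boundary_le_out (A : {set T}) : #|boundary e A| <= #|out_edges A|.
Proof.
apply: leq_trans (leq_imset_card fst _); apply: subset_leq_card; apply/subsetP => x.
rewrite inE => /andP[xA /existsP[y /andP[exy yA]]].
by apply/imsetP; exists (x, y); rewrite // inE /= xA yA exy.
Qed.

(* The edges at v are the out-edges of the single-node subtree {v}. *)
Lemma degree_le_out v : degree e v <= #|out_edges [set v]|.
Proof.
have pair_inj : injective (@pair T T v) by move=> a b [].
rewrite /degree -(card_imset _ pair_inj); apply: subset_leq_card.
apply/subsetP => _ /imsetP[w /[!inE] evw ->]; rewrite /= evw eqxx andbT.
by apply: contraTneq evw => ->; rewrite eirr.
Qed.

Lemma subtree1 v : is_subtree e [set v].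
Proof.
split; first by apply/set0Pn; exists v; rewrite inE.
by move=> a b /set1P-> /set1P->.
Qed.

Lemma out_edge_branch (A : {set T}) d : is_subtree e A ->
  d \in out_edges A -> [disjoint branch d.1 d.2 & A].
Proof. by move=> Asub /[!inE] /and3P[xA yA exy]; apply: branch_off_subtree. Qed.

Lemma out_edges_disjoint (A B : {set T}) :
  [disjoint A & B] -> [disjoint out_edges A & out_edges B].
Proof.
move=> dAB; apply/pred0Pn => -[d /andP[/[!inE] /and3P[dA _ _] /and3P[dB _ _]]].
by rewrite (disjointFr dAB dA) in dB.
Qed.

(* Sorting the out-edges of A by the first of B, C that their branch meets. *)
Lemma out_edges_split (A B C : {set T}) :
  #|out_edges A| <= #|away A (B :|: C)| + #|towards A B| + #|towards A C :&: away A B|.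
Proof.
apply: leq_trans (leq_add (cardsU_le _ _) (leqnn _)) ; apply: leq_trans (cardsU_le _ _).
apply: subset_leq_card; apply/subsetP => d; rewrite !inE disjointUr => /and3P[-> -> ->] /=.
by case: [disjoint _ & B]; case: [disjoint _ & C].
Qed.

Lemma towards_le1 (A B : {set T}) : is_subtree e A -> is_subtree e B ->
  [disjoint A & B] -> #|towards A B| <= 1.
Proof.
move=> Asub Bsub dAB; apply/card_le1_eqP => d1 d2 /setIdP[out1 meet1] /setIdP[out2 meet2].
have dis1 := out_edge_branch Asub out1; have dis2 := out_edge_branch Asub out2.
move: out1 out2 => /[!inE] /and3P[x1A _ e1] /and3P[x2A _ e2].
have /subsetP B2 := subtree_in_branch Bsub (negbT (disjointFr dAB x2A)) e2 meet2.
case/pred0Pn: meet1 => z /andP[z1 zB].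
rewrite [d1]surjective_pairing [d2]surjective_pairing; symmetry.
exact: branch_meet_eq e1 e2 (negbT (disjointFl dis1 x2A)) (negbT (disjointFl dis2 x1A))
  z1 (B2 z zB).
Qed.

Lemma away_le_leaves (A B C : {set T}) :
  is_subtree e A -> is_subtree e B -> is_subtree e C ->
  [disjoint A & B] -> [disjoint A & C] -> [disjoint B & C] ->
  #|away A (B :|: C)| + #|away B (A :|: C)| + #|away C (A :|: B)| <= #|leaves e|.
Proof.
move=> Asub Bsub Csub dAB dAC dBC.
have free X Y d : is_subtree e X -> d \in away X Y ->
    [/\ e d.1 d.2, d.1 \in X :|: Y & [disjoint branch d.1 d.2 & X :|: Y]].
  move=> Xsub /setIdP[out dY]; have dX := out_edge_branch Xsub out.
  by move: out => /[!inE] /and3P[-> _ ->]; rewrite disjointUr dX dY.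
have awayW X Y : away X Y \subset out_edges X by apply/subsetP => d /setIdP[].
rewrite -!cardsU_disjoint; first last.
- exact: disjointW (awayW _ _) (awayW _ _) (out_edges_disjoint dAB).
- rewrite disjointUl; apply/andP; split.
    exact: disjointW (awayW _ _) (awayW _ _) (out_edges_disjoint dAC).
  exact: disjointW (awayW _ _) (awayW _ _) (out_edges_disjoint dBC).
apply: (free_edges_le_leaves (R := A :|: B :|: C)) => d /setUP[/setUP[] | ] dD.
- by rewrite -setUA; apply: free Asub dD.
- by rewrite -setUA setUCA; apply: free Bsub dD.
- by rewrite setUC; apply: free Csub dD.
Qed.

(* The remaining out-edges point towards another subtree.  Three facts bound
   their number; in each, d is an out-edge of A whose branch contains C but
   not B, i.e. C hangs off A on a side away from B. *)

Lemma hanging_unique (A B C : {set T}) : is_subtree e C ->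
  [disjoint A & B] -> [disjoint A & C] -> [disjoint B & C] ->
  forall d1 d2, d1 \in towards A C :&: away A B -> d2 \in towards B C :&: away B A -> False.
Proof.
move=> Csub dAB dAC dBC d1 d2 /setIP[/setIdP[out1 meet1] /setIdP[_ dis1]].
move=> /setIP[/setIdP[out2 meet2] /setIdP[_ dis2]].
move: out1 out2 => /[!inE] /and3P[x1A _ e1] /and3P[x2B _ e2].
have /subsetP C1 := subtree_in_branch Csub (negbT (disjointFr dAC x1A)) e1 meet1.
have /subsetP C2 := subtree_in_branch Csub (negbT (disjointFr dBC x2B)) e2 meet2.
have [z zC] : exists z, z \in C by case: Csub => /set0Pn.
have [x12 _] := branch_meet_eq e1 e2 (negbT (disjointFl dis1 x2B))
  (negbT (disjointFl dis2 x1A)) (C1 z zC) (C2 z zC).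
by rewrite x12 (disjointFl dAB x2B) in x1A.
Qed.

Lemma hanging_blocks (A B C : {set T}) : is_subtree e C -> [disjoint A & C] ->
  forall d d', d \in towards A C :&: away A B -> d' \in towards C B :&: away C A -> False.
Proof.
move=> Csub dAC d d' /setIP[/setIdP[out meetC] /setIdP[_ disB]].
move=> /setIP[/setIdP[out' meetB] /setIdP[_ disA]].
move: out out' => /[!inE] /and3P[xA _ exy] /and3P[cC _ ecw].
have cB := subsetP (subtree_in_branch Csub (negbT (disjointFr dAC xA)) exy meetC) _ cC.
have xn := negbT (disjointFl disA xA).
have wx : d'.2 != d.1 by apply: contraNneq xn => <-; apply: branch_root.
have sub := branch_sub exy ecw (branch_closed exy cB ecw wx) xn.
by case/negP: meetB; apply: disjointWl sub disB.
Qed.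

(* Distinct out-edges of C have disjoint branches: an out-edge of C towards A
   avoids B whenever another one reaches B while avoiding A. *)
Lemma towards_other_away (A B C : {set T}) d d' : is_subtree e B -> is_subtree e C ->
  [disjoint B & C] -> d \in towards C A -> d' \in towards C B :&: away C A ->
  d \in away C B.
Proof.
move=> Bsub Csub dBC /setIdP[out meetA] /setIP[/setIdP[out' meetB] /setIdP[_ disA]].
rewrite inE out /=; apply/pred0Pn => -[z /andP[zB zinB]].
have dis := out_edge_branch Csub out; have dis' := out_edge_branch Csub out'.
move: out out' => /[!inE] /and3P[cC _ e1] /and3P[cC' _ e2].
have /subsetP B2 := subtree_in_branch Bsub (negbT (disjointFl dBC cC')) e2 meetB.
have dd' : d = d'.
  rewrite [d]surjective_pairing [d']surjective_pairing.
  exact: branch_meet_eq e1 e2 (negbT (disjointFl dis cC')) (negbT (disjointFl dis' cC))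
    zB (B2 z zinB).
by rewrite dd' disA in meetA.
Qed.

Lemma out_edges3_le (A B C : {set T}) :
  is_subtree e A -> is_subtree e B -> is_subtree e C ->
  [disjoint A & B] -> [disjoint A & C] -> [disjoint B & C] ->
  #|out_edges A| + #|out_edges B| + #|out_edges C| <= #|leaves e| + 4.
Proof.
move=> Asub Bsub Csub dAB dAC dBC.
have dBA : [disjoint B & A] by rewrite disjoint_sym.
have dCA : [disjoint C & A] by rewrite disjoint_sym.
have dCB : [disjoint C & B] by rewrite disjoint_sym.
have splitA := out_edges_split A B C; have splitB := out_edges_split B A C.
have splitC := out_edges_split C A B.
have free := away_le_leaves Asub Bsub Csub dAB dAC dBC.
have le1I X Y Z : #|towards X Y| <= 1 -> #|towards X Y :&: Z| <= 1.
  by move=> le1; apply: leq_trans le1; apply/subset_leq_card/subsetIl.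
have tAB := towards_le1 Asub Bsub dAB; have tBA := towards_le1 Bsub Asub dBA.
have tCA := towards_le1 Csub Asub dCA.
have hA := le1I _ _ (away A B) (towards_le1 Asub Csub dAC).
have hB := le1I _ _ (away B A) (towards_le1 Bsub Csub dBC).
have hC := le1I _ _ (away C A) (towards_le1 Csub Bsub dCB).
(* Of the hanging edges and the edge from C towards A, at most two exist. *)
have excl_AB := cards_exclusive (hanging_unique Csub dAB dAC dBC).
have excl_AC := cards_exclusive (hanging_blocks (B := B) Csub dAC).
have excl_BC : #|towards C B :&: away C A| = 0 \/
    #|towards B C :&: away B A| = 0 \/ #|towards C A| = 0.
  case: (set_0Vmem (towards C B :&: away C A)) => [-> | [d' d'Q]].
    by left; rewrite cards0.
  right; apply: cards_exclusive => d'' d dB dA.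
  have dAB' : d \in towards C A :&: away C B.
    by rewrite inE dA (towards_other_away Bsub Csub dBC dA d'Q).
  exact: hanging_blocks Csub dBC _ _ dB dAB'.
lia.
Qed.

End Branches.

Theorem lemma3 (T : finType) (e : rel T) (k l : nat) (s t : {set T}) :
  is_tree e ->
  #|leaves e| = k ->
  1 <= l ->
  is_subtree e s -> is_subtree e t ->
  [disjoint s & t] ->
  #|boundary e s| = l ->
  #|boundary e t| + l = k + 2 ->
  forall v : T, 2 < degree e v -> (v \in s) || (v \in t).
Proof.
move=> [[esym eirr] [_ [_ eacyc]]] leaves_k _ ssub tsub dst bs_l bt_l v deg_v.
apply/negPn/negP => /norP[vs vt].
have dsv : [disjoint s & [set v]] by rewrite disjoint_sym disjoints1.
have dtv : [disjoint t & [set v]] by rewrite disjoint_sym disjoints1.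
have count := out_edges3_le esym eirr eacyc ssub tsub (subtree1 e v) dst dsv dtv.
have bs := boundary_le_out e s; have bt := boundary_le_out e t.
have dv := degree_le_out eirr v.
lia.
Qed.
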